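(* Let $d\ge 3$, $\lambda>0$ with $\log d\lesssim\lambda\lesssim d$, $\rho_0=\log^{-c_0}d$ for a constant $c_0>0$, $\mu=\rho_0/(d+\lambda)$, and let $(a,b,c)$ solve \[ \dot a=a(24-16a-8r),\quad \dot b=8(1+\lambda)(1-r)b-16(1+\lambda)^2b^2,\quad \dot c=8(1-r)c-16c^2, \] with $r=a+(1+\lambda)b+(d-2)c$ and $a(0)=b(0)=c(0)=\mu$. Let $B=(1+\lambda)b$, $C=(d-2)c$, fix $\rho\in(0,1/12)$ and let $T_{1a}=\inf\{t\ge0: r(t)\ge\rho\}$. Then, for $d$ large enough: (1) For all $t\in[0,T_{1a}]$, $r(t)\le\rho$ and \[ a(0)e^{24(1-\rho)t}\le a(t)\le a(0)e^{24t},\quad b(0)e^{8(1+\lambda)(1-3\rho)t}\le b(t)\le b(0)e^{8(1+\lambda)t}, \] \[ c(0)e^{(8(1-\rho)-16\rho/(d-2))t}\le c(t)\le c(0)e^{8t}. \] (2) $T_{1a}=O(\lambda^{-1}\log d)$. (3) $a(T_{1a})=O(\rho_0/d)$, $C(T_{1a})=O(\rho_0)$, and $B(T_{1a})=\rho-a(T_{1a})-C(T_{1a})=\rho(1+o(1))$.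
   Context: This ODE is the population gradient flow of the phase-retrieval model $y=(x^\top w_\star)^2+\nu$, $x\sim\mathcal N(0,I_d+\lambda vv^\top)$ ($v\perp w_\star$ unit vectors), with network $f_W(x)=\sum_{j=1}^d(w_j^\top x)^2$, in the coordinates $WW^\top=a\,w_\star w_\star^\top+b\,vv^\top+c(I-w_\star w_\star^\top-vv^\top)$, started from $WW^\top=\mu I_d$. Asymptotic notation refers to $d\to\infty$. *)

From Stdlib Require Import Reals.
From Coquelicot Require Import Coquelicot.
Open Scope R_scope.

Definition rfun (d : nat) (lam : R) (a b c : R -> R) (t : R) : R :=
  a t + (1 + lam) * b t + (INR d - 2) * c t.

Definition rho0 (d : nat) (c0 : R) : R := Rpower (ln (INR d)) (- c0).

Definition mu (d : nat) (lam c0 : R) : R := rho0 d c0 / (INR d + lam).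

Definition is_solution (d : nat) (lam c0 : R) (a b c : R -> R) : Prop :=
  a 0 = mu d lam c0 /\ b 0 = mu d lam c0 /\ c 0 = mu d lam c0 /\
  (forall t, 0 < t ->
     is_derive a t (a t * (24 - 16 * a t - 8 * rfun d lam a b c t)) /\
     is_derive b t (8 * (1 + lam) * (1 - rfun d lam a b c t) * b t
                    - 16 * (1 + lam) ^ 2 * (b t) ^ 2) /\
     is_derive c t (8 * (1 - rfun d lam a b c t) * c t - 16 * (c t) ^ 2)) /\
  filterlim a (at_right 0) (locally (a 0)) /\
  filterlim b (at_right 0) (locally (b 0)) /\
  filterlim c (at_right 0) (locally (c 0)).

(* T_{1a} = inf { t >= 0 : r(t) >= rho }  (in Rbar; +oo if the set is empty) *)
Definition T1a (d : nat) (lam rho : R) (a b c : R -> R) : Rbar :=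
  Glb_Rbar (fun t => 0 <= t /\ rho <= rfun d lam a b c t).

(* While [r < rho] and [a, b, c > 0], the per-capita rates [a'/a], [b'/b], [c'/c] stay
   between constants, so each coordinate is squeezed between two exponentials (compare
   [x(t) e^(-m t)] through the mean value theorem).  In particular [B = (1 + lam) b] grows
   at rate at least [8 (1 + lam) (1 - 3 rho) >= 6 lam] from [B 0 >= rho0 / d >= d^(-1-c0)],
   so it would exceed [1] by time [(1 + c0) ln d / (6 lam)]: the invariant breaks before
   then.  At the first exit time [T] the coordinates are still positive by the exponential
   lower bounds, hence [r T = rho] and [T = T1a].  Since [24 T = O(1)], the upper bounds
   give [a T = O(rho0 / d)] and [C T = O(rho0)], and [B T = rho - a T - C T]. *)

From Stdlib Require Import Reals Lra Classical.
From Coquelicot Require Import Coquelicot.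
Open Scope R_scope.

Lemma filterlim_lt {T} {F : (T -> Prop) -> Prop} (f : T -> R) l K :
  filterlim f F (locally l) -> l < K -> F (fun s => f s < K).
Proof. intros Hf Hl; exact (Hf _ (open_lt K l Hl)). Qed.

Lemma filterlim_gt {T} {F : (T -> Prop) -> Prop} (f : T -> R) l K :
  filterlim f F (locally l) -> K < l -> F (fun s => K < f s).
Proof. intros Hf Hl; exact (Hf _ (open_gt K l Hl)). Qed.

Lemma filterlim_lincomb {T} {F : (T -> Prop) -> Prop} {FF : Filter F}
  (f g : T -> R) (k lf lg : R) :
  filterlim f F (locally lf) -> filterlim g F (locally lg) ->
  filterlim (fun s => f s + k * g s) F (locally (lf + k * lg)).
Proof.
  intros Hf Hg.
  apply (filterlim_comp_2 (G := locally lf) (H := locally (k * lg))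
           f (fun s => k * g s) Rplus Hf).
  - exact (filterlim_comp _ _ _ g (fun z => scal k z) _ _ _ Hg (filterlim_scal_r k lg)).
  - exact (filterlim_plus lf (k * lg)).
Qed.

Lemma right_limit_le (f g : R -> R) (x t : R) : x < t ->
  filterlim f (at_right x) (locally (f x)) -> filterlim g (at_right x) (locally (g x)) ->
  (forall s, x < s < t -> f s <= g s) -> f x <= g x.
Proof.
  intros Hxt Hf Hg Hle.
  apply (filterlim_le (F := at_right x) f g (f x) (g x)); [| exact Hf | exact Hg].
  exists (mkposreal _ (proj2 (Rlt_0_minus _ _) Hxt)); intros s Hs Hxs.
  apply Hle; split; [exact Hxs |].
  change (Rabs (s - x) < t - x) in Hs. apply Rabs_def2 in Hs; lra.
Qed.

Lemma left_limit_le (f g : R -> R) (x t : R) : t < x ->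
  filterlim f (at_left x) (locally (f x)) -> filterlim g (at_left x) (locally (g x)) ->
  (forall s, t < s < x -> f s <= g s) -> f x <= g x.
Proof.
  intros Htx Hf Hg Hle.
  apply (filterlim_le (F := at_left x) f g (f x) (g x)); [| exact Hf | exact Hg].
  exists (mkposreal _ (proj2 (Rlt_0_minus _ _) Htx)); intros s Hs Hxs.
  apply Hle; split; [| exact Hxs].
  change (Rabs (s - x) < x - t) in Hs. apply Rabs_def2 in Hs; lra.
Qed.

Lemma first_exit_time (P : R -> Prop) (t0 : R) :
  (forall t, 0 <= t -> P t -> within (Rle 0) (locally t) P) ->
  P 0 -> 0 <= t0 -> ~ P t0 ->
  exists T, 0 < T <= t0 /\ (forall s, 0 <= s < T -> P s) /\ ~ P T.
Proof.
  intros Hopen HP0 Ht0 HPt0.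
  set (E := fun t => 0 <= t /\ ~ P t).
  destruct (Glb_Rbar_correct E) as [Hlb Hglb].
  destruct (Glb_Rbar E) as [T | |] eqn:ET.
  2: { exact (False_ind _ (Hlb t0 (conj Ht0 HPt0))). }
  2: { destruct (Hglb 0); intros x [Hx _]; exact Hx. }
  assert (HTt0 : T <= t0) by exact (Hlb t0 (conj Ht0 HPt0)).
  assert (HT0 : 0 <= T) by (apply (Hglb (Finite 0)); intros x [Hx _]; exact Hx).
  assert (Hbefore : forall s, 0 <= s < T -> P s).
  { intros s Hs; apply NNPP; intros HPs.
    pose proof (Hlb s (conj (proj1 Hs) HPs)) as Hle; simpl in Hle; lra. }
  assert (HPT : ~ P T).
  { intros HPT; destruct (Hopen T HT0 HPT) as [del Hdel].
    assert (Hgap : Rbar_le (T + del) T).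
    { apply Hglb; intros x [Hx HPx]; simpl.
      destruct (Rlt_or_le x (T + del)) as [Hlt | Hge]; [exfalso | exact Hge].
      destruct (Rlt_or_le x T) as [HxT | HTx]; [exact (HPx (Hbefore x (conj Hx HxT)))|].
      apply HPx, Hdel, Hx; change (Rabs (x - T) < del); apply Rabs_def1; lra. }
    simpl in Hgap; pose proof (cond_pos del); lra. }
  exists T; repeat split; try assumption.
  destruct HT0 as [HT0 | HT0]; [exact HT0 | subst T; contradiction].
Qed.

Lemma exp_le_compat (x y : R) : x <= y -> exp x <= exp y.
Proof. intros [Hlt | ->]; [exact (Rlt_le _ _ (exp_increasing _ _ Hlt)) | apply Rle_refl]. Qed.

Lemma exp_weight_cancel (k s : R) : exp (- k * s) * exp (k * s) = 1.
Proof. rewrite <- exp_plus; replace (- k * s + k * s) with 0 by ring; apply exp_0. Qed.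

Lemma nondecreasing_of_derive_nonneg (F F' : R -> R) (s t : R) : s <= t ->
  (forall u, s <= u <= t -> is_derive F u (F' u)) ->
  (forall u, s < u < t -> 0 <= F' u) -> F s <= F t.
Proof.
  intros [Hst | ->] HF HF'; [| lra].
  destruct (MVT_cor2 F F' s t Hst) as [u [Hu Hsut]].
  { intros u Hu; apply is_derive_Reals, HF, Hu. }
  pose proof (HF' u Hsut); nra.
Qed.

Lemma is_derive_exp_weight (x : R -> R) (g : R) (k u : R) :
  is_derive x u g ->
  is_derive (fun v => x v * exp (- k * v)) u ((g - k * x u) * exp (- k * u)).
Proof.
  intros Hx; auto_derive.
  - exists g; exact Hx.
  - replace (Derive (fun v => x v) u) with g by (symmetry; apply is_derive_unique, Hx); ring.
Qed.

Lemma exp_lower_bound_of_rate_ge (x g : R -> R) (m t : R) : 0 < t ->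
  filterlim x (at_right 0) (locally (x 0)) ->
  (forall s, 0 < s <= t -> is_derive x s (x s * g s)) ->
  (forall s, 0 < s < t -> 0 <= x s * (g s - m)) ->
  x 0 * exp (m * t) <= x t.
Proof.
  intros Ht Hx0 Hx Hg.
  (* [x s * exp (- m s)] is nondecreasing on [(0, t]]; then let [s] tend to [0+]. *)
  set (C := x t * exp (- m * t)).
  assert (HC : filterlim (fun s => C * exp (m * s)) (at_right 0) (locally (C * exp (m * 0)))).
  { apply (filterlim_filter_le_1 _ (filter_le_within _)).
    apply (ex_derive_continuous (fun s => C * exp (m * s))); auto_derive; exact I. }
  assert (Hx0C : x 0 <= C * exp (m * 0)).
  { apply (right_limit_le x (fun s => C * exp (m * s)) 0 t Ht Hx0 HC).
    intros s Hs.
    assert (Hmono : x s * exp (- m * s) <= C).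
    { apply (nondecreasing_of_derive_nonneg (fun v => x v * exp (- m * v))
               (fun u => (x u * g u - m * x u) * exp (- m * u))); [lra | |].
      - intros u Hu; apply is_derive_exp_weight, Hx; lra.
      - intros u Hu; apply Rmult_le_pos; [| apply Rlt_le, exp_pos].
        pose proof (Hg u ltac:(lra)); nra. }
    apply (Rmult_le_compat_r (exp (m * s))) in Hmono; [| apply Rlt_le, exp_pos].
    rewrite Rmult_assoc, exp_weight_cancel, Rmult_1_r in Hmono; exact Hmono. }
  rewrite Rmult_0_r, exp_0, Rmult_1_r in Hx0C.
  apply (Rmult_le_compat_r (exp (m * t))) in Hx0C; [| apply Rlt_le, exp_pos].
  unfold C in Hx0C; rewrite Rmult_assoc, exp_weight_cancel, Rmult_1_r in Hx0C; exact Hx0C.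
Qed.

Lemma exp_upper_bound_of_rate_le (x g : R -> R) (M t : R) : 0 < t ->
  filterlim x (at_right 0) (locally (x 0)) ->
  (forall s, 0 < s <= t -> is_derive x s (x s * g s)) ->
  (forall s, 0 < s < t -> 0 <= x s * (M - g s)) ->
  x t <= x 0 * exp (M * t).
Proof.
  intros Ht Hx0 Hx Hg.
  enough (H : - x 0 * exp (M * t) <= - x t) by lra.
  apply (exp_lower_bound_of_rate_ge (fun s => - x s) g M t Ht).
  - exact (filterlim_comp _ _ _ x Ropp _ _ _ Hx0 (filterlim_opp (x 0))).
  - intros s Hs; replace (- x s * g s) with (- (x s * g s)) by ring.
    exact (is_derive_opp x s _ (Hx s Hs)).
  - intros s Hs; pose proof (Hg s Hs); nra.
Qed.

Lemma exp_bounds_of_rate_between (x g : R -> R) (m M t : R) : 0 < t ->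
  filterlim x (at_right 0) (locally (x 0)) ->
  (forall s, 0 < s <= t -> is_derive x s (x s * g s)) ->
  (forall s, 0 < s < t -> 0 < x s /\ m <= g s <= M) ->
  x 0 * exp (m * t) <= x t <= x 0 * exp (M * t).
Proof.
  intros Ht Hx0 Hx Hg; split.
  - apply (exp_lower_bound_of_rate_ge x g m t Ht Hx0 Hx); intros s Hs; pose proof (Hg s Hs); nra.
  - apply (exp_upper_bound_of_rate_le x g M t Ht Hx0 Hx); intros s Hs; pose proof (Hg s Hs); nra.
Qed.

Lemma INR_ge3 (d : nat) : (3 <= d)%nat -> 3 <= INR d.
Proof. intros Hd; apply le_INR in Hd; simpl in Hd; lra. Qed.

Lemma ln_INR_pos (d : nat) : (3 <= d)%nat -> 0 < ln (INR d).
Proof. intros Hd; apply INR_ge3 in Hd; rewrite <- ln_1; apply ln_increasing; lra. Qed.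

Lemma rho0_pos (d : nat) (c0 : R) : 0 < rho0 d c0.
Proof. apply exp_pos. Qed.

Lemma mu_pos (d : nat) (lam c0 : R) : 0 <= INR d -> 0 < lam -> 0 < mu d lam c0.
Proof. intros Hd Hlam; apply Rdiv_lt_0_compat; [apply rho0_pos | lra]. Qed.

Lemma rho0_mul_exp_ge1 (d : nat) (c0 : R) : (3 <= d)%nat -> 0 < c0 ->
  1 <= rho0 d c0 * exp (c0 * ln (INR d)).
Proof.
  intros Hd Hc0; pose proof (ln_INR_pos d Hd) as Hld.
  assert (Hlnln : ln (ln (INR d)) <= ln (INR d)).
  { pose proof (exp_ineq1_le (ln (ln (INR d)))) as H; rewrite exp_ln in H; lra. }
  unfold rho0, Rpower; rewrite <- exp_plus, <- exp_0; apply exp_le_compat; nra.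
Qed.

Lemma rho0_le_mul_mu (d : nat) (lam c0 : R) : 1 <= INR d -> 0 < lam ->
  rho0 d c0 <= (1 + lam) * mu d lam c0 * INR d.
Proof.
  intros Hd Hlam; pose proof (rho0_pos d c0).
  unfold mu; apply (Rmult_le_reg_r (INR d + lam)); [lra |].
  replace ((1 + lam) * (rho0 d c0 / (INR d + lam)) * INR d * (INR d + lam))
    with (rho0 d c0 * ((1 + lam) * INR d)) by (field; lra).
  apply Rmult_le_compat_l; nra.
Qed.

Lemma mu_le_rho0_div (d : nat) (lam c0 : R) : 0 < INR d -> 0 < lam ->
  mu d lam c0 <= rho0 d c0 / INR d.
Proof.
  intros Hd Hlam; pose proof (rho0_pos d c0).
  unfold mu, Rdiv; apply Rmult_le_compat_l; [lra |].
  apply Rinv_le_contravar; lra.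
Qed.

Lemma mul_mu_le_rho0 (d : nat) (lam c0 : R) : 0 < INR d -> 0 < lam ->
  (INR d - 2) * mu d lam c0 <= rho0 d c0.
Proof.
  intros Hd Hlam; pose proof (rho0_pos d c0).
  unfold mu; apply (Rmult_le_reg_r (INR d + lam)); [lra |].
  replace ((INR d - 2) * (rho0 d c0 / (INR d + lam)) * (INR d + lam))
    with (rho0 d c0 * (INR d - 2)) by (field; lra).
  apply Rmult_le_compat_l; lra.
Qed.

Lemma rho0_eventually_le (c0 del : R) : 0 < c0 -> 0 < del ->
  exists D : nat, forall d, (D <= d)%nat -> rho0 d c0 <= del.
Proof.
  intros Hc0 Hdel.
  destruct (INR_archimed 1 (exp (exp (- ln del / c0))) ltac:(lra)) as [D HD].
  exists D; intros d HDd; apply le_INR in HDd.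
  assert (Hlnln : - ln del / c0 < ln (ln (INR d))).
  { rewrite <- (ln_exp (- ln del / c0)).
    apply ln_increasing; [apply exp_pos |].
    rewrite <- (ln_exp (exp (- ln del / c0))).
    apply ln_increasing; [apply exp_pos | lra]. }
  unfold rho0, Rpower; rewrite <- (exp_ln del Hdel); apply exp_le_compat.
  apply (Rmult_lt_compat_l c0) in Hlnln; [| exact Hc0].
  replace (c0 * (- ln del / c0)) with (- ln del) in Hlnln by (field; lra); lra.
Qed.

Lemma rho0_eventually_small (c0 rho eps Ca : R) : 0 < c0 -> 0 < rho -> 0 < eps -> 0 < Ca ->
  exists D : nat, forall d, (D <= d)%nat -> rho0 d c0 < rho /\ 2 * Ca * rho0 d c0 <= eps * rho.
Proof.
  intros Hc0 Hrho Heps HCa.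
  destruct (rho0_eventually_le c0 (Rmin (rho / 2) (eps * rho / (2 * Ca))) Hc0) as [D HD].
  { apply Rmin_pos; [lra | apply Rdiv_lt_0_compat; nra]. }
  exists D; intros d HdD; pose proof (HD d HdD) as Hrho0.
  pose proof (Rmin_l (rho / 2) (eps * rho / (2 * Ca))).
  pose proof (Rmin_r (rho / 2) (eps * rho / (2 * Ca))).
  split; [lra |]; rewrite Rmult_comm; apply Rle_div_r; lra.
Qed.

Lemma rfun_limit {F : (R -> Prop) -> Prop} {FF : Filter F}
  (d : nat) (lam : R) (a b c : R -> R) (la lb lc : R) :
  filterlim a F (locally la) -> filterlim b F (locally lb) -> filterlim c F (locally lc) ->
  filterlim (rfun d lam a b c) F (locally (la + (1 + lam) * lb + (INR d - 2) * lc)).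
Proof.
  intros Ha Hb Hc.
  exact (filterlim_lincomb _ _ _ _ _ (filterlim_lincomb _ _ _ _ _ Ha Hb) Hc).
Qed.

Section PhaseOne.

Variables (d : nat) (lam c0 rho : R) (a b c : R -> R).
Hypothesis d_ge3 : (3 <= d)%nat.
Hypothesis lam_pos : 0 < lam.
Hypothesis rho_range : 0 < rho < 1 / 12.
Hypothesis sol : is_solution d lam c0 a b c.

Local Notation r := (rfun d lam a b c).

Let d_gt2 : 2 < INR d.
Proof. pose proof (INR_ge3 d d_ge3); lra. Qed.

Definition rate_a t := 24 - 16 * a t - 8 * r t.
Definition rate_b t := 8 * (1 + lam) * (1 - r t) - 16 * (1 + lam) ^ 2 * b t.
Definition rate_c t := 8 * (1 - r t) - 16 * c t.

Lemma solution_init : a 0 = mu d lam c0 /\ b 0 = mu d lam c0 /\ c 0 = mu d lam c0.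
Proof. destruct sol as (Ha & Hb & Hc & _); auto. Qed.

Lemma solution_derive t : 0 < t ->
  is_derive a t (a t * rate_a t) /\ is_derive b t (b t * rate_b t) /\
  is_derive c t (c t * rate_c t).
Proof.
  intros Ht; destruct sol as (_ & _ & _ & Hder & _); destruct (Hder t Ht) as (Ha & Hb & Hc).
  unfold rate_a, rate_b, rate_c; split; [exact Ha | split].
  - replace (b t * _) with (8 * (1 + lam) * (1 - r t) * b t - 16 * (1 + lam) ^ 2 * b t ^ 2)
      by ring; exact Hb.
  - replace (c t * _) with (8 * (1 - r t) * c t - 16 * c t ^ 2) by ring; exact Hc.
Qed.

Lemma solution_right_limit :
  filterlim a (at_right 0) (locally (a 0)) /\ filterlim b (at_right 0) (locally (b 0)) /\
  filterlim c (at_right 0) (locally (c 0)).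
Proof. destruct sol as (_ & _ & _ & _ & H); exact H. Qed.

Lemma rfun_init : r 0 = rho0 d c0.
Proof.
  destruct solution_init as (Ha & Hb & Hc); unfold rfun, mu in *; rewrite Ha, Hb, Hc.
  field; lra.
Qed.

(* Positivity is part of the invariant because the rate bounds use [a, B, C <= r]. *)
Definition below_threshold t := 0 < a t /\ 0 < b t /\ 0 < c t /\ r t < rho.

Lemma below_threshold_eventually (F : (R -> Prop) -> Prop) {FF : Filter F} t :
  filterlim a F (locally (a t)) -> filterlim b F (locally (b t)) ->
  filterlim c F (locally (c t)) -> below_threshold t -> F below_threshold.
Proof.
  intros Ha Hb Hc (Hat & Hbt & Hct & Hrt).
  apply filter_and; [exact (filterlim_gt a _ 0 Ha Hat) |].
  apply filter_and; [exact (filterlim_gt b _ 0 Hb Hbt) |].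
  apply filter_and; [exact (filterlim_gt c _ 0 Hc Hct) |].
  exact (filterlim_lt r _ rho (rfun_limit _ _ _ _ _ _ _ _ Ha Hb Hc) Hrt).
Qed.

Lemma continuous_solution t : 0 < t ->
  continuous a t /\ continuous b t /\ continuous c t.
Proof.
  intros Ht; destruct (solution_derive t Ht) as (Ha & Hb & Hc).
  split; [| split]; apply (ex_derive_continuous (V := R_NormedModule)); eexists; eassumption.
Qed.

Lemma below_threshold_open t : 0 <= t -> below_threshold t ->
  within (Rle 0) (locally t) below_threshold.
Proof.
  intros [Ht | <-] HG.
  - destruct (continuous_solution t Ht) as (Ha & Hb & Hc).
    unfold within; apply (filter_imp below_threshold); [auto |].
    exact (below_threshold_eventually _ t Ha Hb Hc HG).
  - destruct solution_right_limit as (Ha & Hb & Hc).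
    pose proof (below_threshold_eventually _ 0 Ha Hb Hc HG) as Hright.
    unfold at_right, within in Hright |- *; refine (filter_imp _ _ _ Hright).
    intros s Hs [Hpos | <-]; [exact (Hs Hpos) | exact HG].
Qed.

Lemma components_le_rfun t : below_threshold t ->
  a t <= r t /\ (1 + lam) * b t <= r t /\ (INR d - 2) * c t <= r t.
Proof.
  intros (Ha & Hb & Hc & _); unfold rfun.
  assert (0 < (1 + lam) * b t) by (apply Rmult_lt_0_compat; lra).
  assert (0 < (INR d - 2) * c t) by (apply Rmult_lt_0_compat; lra).
  lra.
Qed.

Lemma rate_a_bounds t : below_threshold t -> 24 * (1 - rho) <= rate_a t <= 24.
Proof.
  intros HG; pose proof (components_le_rfun t HG); destruct HG as (? & ? & ? & ?).
  unfold rate_a; lra.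
Qed.

Lemma rate_b_bounds t : below_threshold t ->
  8 * (1 + lam) * (1 - 3 * rho) <= rate_b t <= 8 * (1 + lam).
Proof.
  intros HG; pose proof (components_le_rfun t HG); destruct HG as (? & ? & ? & ?).
  unfold rate_b; nra.
Qed.

Lemma rate_c_bounds t : below_threshold t ->
  8 * (1 - rho) - 16 * rho / (INR d - 2) <= rate_c t <= 8.
Proof.
  intros HG; pose proof (components_le_rfun t HG); destruct HG as (? & ? & ? & ?).
  assert (c t <= rho / (INR d - 2)) by (apply Rle_div_r; lra).
  unfold rate_c, Rdiv in *; lra.
Qed.

Lemma growth_bounds t : 0 < t -> (forall s, 0 < s < t -> below_threshold s) ->
  a 0 * exp (24 * (1 - rho) * t) <= a t <= a 0 * exp (24 * t) /\
  b 0 * exp (8 * (1 + lam) * (1 - 3 * rho) * t) <= b t <= b 0 * exp (8 * (1 + lam) * t) /\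
  c 0 * exp ((8 * (1 - rho) - 16 * rho / (INR d - 2)) * t) <= c t <= c 0 * exp (8 * t).
Proof.
  intros Ht HG; destruct solution_right_limit as (Ha & Hb & Hc).
  assert (Hder : forall s, 0 < s <= t -> is_derive a s (a s * rate_a s) /\
            is_derive b s (b s * rate_b s) /\ is_derive c s (c s * rate_c s))
    by (intros s Hs; apply solution_derive; lra).
  split; [| split].
  - apply (exp_bounds_of_rate_between a rate_a); [exact Ht | exact Ha | apply Hder |].
    intros s Hs; split; [apply (HG s Hs) | exact (rate_a_bounds s (HG s Hs))].
  - apply (exp_bounds_of_rate_between b rate_b); [exact Ht | exact Hb | apply Hder |].
    intros s Hs; split; [apply (HG s Hs) | exact (rate_b_bounds s (HG s Hs))].
  - apply (exp_bounds_of_rate_between c rate_c); [exact Ht | exact Hc | apply Hder |].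
    intros s Hs; split; [apply (HG s Hs) | exact (rate_c_bounds s (HG s Hs))].
Qed.

Definition horizon := (1 + c0) / 6 * ln (INR d) / lam.

Hypothesis c0_pos : 0 < c0.

Lemma horizon_pos : 0 < horizon.
Proof.
  pose proof (ln_INR_pos d d_ge3); unfold horizon.
  apply Rdiv_lt_0_compat; [apply Rmult_lt_0_compat |]; lra.
Qed.

Lemma exp_horizon_ge :
  INR d * exp (c0 * ln (INR d)) <= exp (8 * (1 + lam) * (1 - 3 * rho) * horizon).
Proof.
  pose proof (ln_INR_pos d d_ge3); pose proof horizon_pos.
  rewrite <- (exp_ln (INR d)) at 1 by lra; rewrite <- exp_plus; apply exp_le_compat.
  replace (ln (INR d) + c0 * ln (INR d)) with (6 * lam * horizon) by (unfold horizon; field; lra).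
  apply Rmult_le_compat_r; nra.
Qed.

(* Over [horizon], [B = (1 + lam) b] grows at rate [>= 6 lam] (as [rho < 1/12]) from
   [B 0 >= rho0 / d], i.e. by a factor [>= d^(1 + c0)], and [rho0 >= d^(-c0)]. *)
Lemma B_growth_at_horizon_ge1 :
  1 <= (1 + lam) * mu d lam c0 * exp (8 * (1 + lam) * (1 - 3 * rho) * horizon).
Proof.
  pose proof (mu_pos d lam c0 ltac:(lra) lam_pos).
  apply (Rle_trans _ _ _ (rho0_mul_exp_ge1 d c0 d_ge3 c0_pos)).
  apply (Rle_trans _ ((1 + lam) * mu d lam c0 * INR d * exp (c0 * ln (INR d)))).
  - apply Rmult_le_compat_r; [apply Rlt_le, exp_pos | apply rho0_le_mul_mu; lra].
  - rewrite Rmult_assoc; apply Rmult_le_compat_l; [nra | exact exp_horizon_ge].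
Qed.

Lemma leaves_threshold_before_horizon : exists t0, 0 <= t0 <= horizon /\ ~ below_threshold t0.
Proof.
  apply NNPP; intros Hstay.
  assert (HG : forall s, 0 <= s <= horizon -> below_threshold s).
  { intros s Hs; apply NNPP; intros HGs; apply Hstay; exists s; tauto. }
  pose proof horizon_pos as Hh.
  destruct (growth_bounds horizon Hh (fun s Hs => HG s ltac:(lra))) as (_ & [Hb _] & _).
  destruct solution_init as (_ & Hb0 & _); rewrite Hb0 in Hb.
  pose proof (components_le_rfun horizon (HG horizon ltac:(lra))) as (_ & HBr & _).
  destruct (HG horizon ltac:(lra)) as (_ & _ & _ & Hr).
  pose proof B_growth_at_horizon_ge1.
  apply (Rmult_le_compat_l (1 + lam)) in Hb; [rewrite <- Rmult_assoc in Hb; lra | lra].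
Qed.

Hypothesis rho0_lt_rho : rho0 d c0 < rho.

Variable K1 : R.
Hypothesis K1_pos : 0 < K1.
Hypothesis lam_ge : K1 * ln (INR d) <= lam.

Definition growth_const := exp (4 * (1 + c0) / K1).

Lemma exp_24_horizon_le : exp (24 * horizon) <= growth_const.
Proof.
  pose proof (ln_INR_pos d d_ge3); apply exp_le_compat.
  unfold horizon; apply (Rmult_le_reg_r (K1 * lam)); [nra |].
  replace (24 * ((1 + c0) / 6 * ln (INR d) / lam) * (K1 * lam))
    with (4 * (1 + c0) * (K1 * ln (INR d))) by (field; lra).
  replace (4 * (1 + c0) / K1 * (K1 * lam)) with (4 * (1 + c0) * lam) by (field; lra).
  apply Rmult_le_compat_l; lra.
Qed.

Lemma below_threshold_init : below_threshold 0.
Proof.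
  pose proof (mu_pos d lam c0 ltac:(lra) lam_pos).
  unfold below_threshold; rewrite rfun_init; destruct solution_init as (-> & -> & ->); tauto.
Qed.

Section ExitTime.

Variable T : R.
Hypothesis T_pos : 0 < T.
Hypothesis below_before_T : forall s, 0 <= s < T -> below_threshold s.
Hypothesis not_below_T : ~ below_threshold T.
Hypothesis T_le_horizon : T <= horizon.

Lemma exp_24_exit_le : exp (24 * T) <= growth_const.
Proof.
  eapply Rle_trans; [| exact exp_24_horizon_le]; apply exp_le_compat; lra.
Qed.

Lemma bounds_upto_exit t : 0 <= t <= T ->
  a 0 * exp (24 * (1 - rho) * t) <= a t <= a 0 * exp (24 * t) /\
  b 0 * exp (8 * (1 + lam) * (1 - 3 * rho) * t) <= b t <= b 0 * exp (8 * (1 + lam) * t) /\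
  c 0 * exp ((8 * (1 - rho) - 16 * rho / (INR d - 2)) * t) <= c t <= c 0 * exp (8 * t).
Proof.
  intros [[Ht | <-] HtT].
  - apply growth_bounds; [exact Ht |]; intros s Hs; apply below_before_T; lra.
  - rewrite !Rmult_0_r, exp_0, !Rmult_1_r; repeat split; apply Rle_refl.
Qed.

Lemma positive_at_exit : 0 < a T /\ 0 < b T /\ 0 < c T.
Proof.
  destruct (bounds_upto_exit T ltac:(lra)) as ([Ha _] & [Hb _] & [Hc _]).
  destruct solution_init as (Ha0 & Hb0 & Hc0); rewrite Ha0 in Ha; rewrite Hb0 in Hb;
    rewrite Hc0 in Hc.
  pose proof (mu_pos d lam c0 ltac:(lra) lam_pos) as Hmu.
  repeat split; [eapply Rlt_le_trans; [| eassumption] ..];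
    apply Rmult_lt_0_compat; [exact Hmu | apply exp_pos | exact Hmu | apply exp_pos |
                              exact Hmu | apply exp_pos].
Qed.

Lemma a_at_exit : 0 < a T <= growth_const * rho0 d c0 / INR d.
Proof.
  split; [apply positive_at_exit |].
  destruct (bounds_upto_exit T ltac:(lra)) as ([_ Ha] & _); destruct solution_init as (Ha0 & _).
  rewrite Ha0 in Ha; eapply Rle_trans; [exact Ha |].
  replace (growth_const * rho0 d c0 / INR d) with (rho0 d c0 / INR d * growth_const)
    by (field; lra).
  apply Rmult_le_compat; [apply Rlt_le, mu_pos; lra | apply Rlt_le, exp_pos | |].
  - apply mu_le_rho0_div; lra.
  - exact exp_24_exit_le.
Qed.

Lemma C_at_exit : 0 < (INR d - 2) * c T <= growth_const * rho0 d c0.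
Proof.
  split; [apply Rmult_lt_0_compat; [lra | apply positive_at_exit] |].
  destruct (bounds_upto_exit T ltac:(lra)) as (_ & _ & [_ Hc]).
  destruct solution_init as (_ & _ & Hc0).
  rewrite Hc0 in Hc.
  apply (Rle_trans _ ((INR d - 2) * mu d lam c0 * exp (8 * T))).
  - rewrite Rmult_assoc; apply Rmult_le_compat_l; lra.
  - rewrite (Rmult_comm growth_const).
    apply Rmult_le_compat; [| apply Rlt_le, exp_pos | apply mul_mu_le_rho0; lra |].
    + pose proof (mu_pos d lam c0 ltac:(lra) lam_pos); nra.
    + eapply Rle_trans; [| exact exp_24_exit_le]; apply exp_le_compat; lra.
Qed.

Lemma rfun_le_upto_exit t : 0 <= t <= T -> r t <= rho.
Proof.
  intros [Ht0 [HtT | ->]]; [apply Rlt_le, (below_before_T t); lra |].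
  destruct (continuous_solution T T_pos) as (Ha & Hb & Hc).
  apply (left_limit_le r (fun _ => rho) T 0 T_pos).
  - apply (filterlim_filter_le_1 _ (filter_le_within _)), (rfun_limit _ _ _ _ _ _ _ _ Ha Hb Hc).
  - apply filterlim_const.
  - intros s Hs; apply Rlt_le, below_before_T; lra.
Qed.

Lemma rfun_exit : r T = rho.
Proof.
  apply Rle_antisym; [apply rfun_le_upto_exit; lra |].
  apply Rnot_lt_le; intros Hlt; apply not_below_T.
  pose proof positive_at_exit; unfold below_threshold; tauto.
Qed.

Lemma T1a_exit : T1a d lam rho a b c = Finite T.
Proof.
  apply is_glb_Rbar_unique; split.
  - intros t [Ht Hrt]; simpl; apply Rnot_lt_le; intros HtT.
    destruct (below_before_T t (conj Ht HtT)) as (_ & _ & _ & Hlt); lra.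
  - intros l Hl; apply Hl; split; [lra | rewrite rfun_exit; apply Rle_refl].
Qed.

End ExitTime.

Theorem phase_one : exists T, T1a d lam rho a b c = Finite T /\ 0 < T <= horizon /\
  r T = rho /\ 0 < a T <= growth_const * rho0 d c0 / INR d /\
  0 < (INR d - 2) * c T <= growth_const * rho0 d c0 /\
  forall t, 0 <= t <= T -> r t <= rho /\
    a 0 * exp (24 * (1 - rho) * t) <= a t <= a 0 * exp (24 * t) /\
    b 0 * exp (8 * (1 + lam) * (1 - 3 * rho) * t) <= b t <= b 0 * exp (8 * (1 + lam) * t) /\
    c 0 * exp ((8 * (1 - rho) - 16 * rho / (INR d - 2)) * t) <= c t <= c 0 * exp (8 * t).
Proof.
  destruct leaves_threshold_before_horizon as (t0 & Ht0 & Hleave).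
  destruct (first_exit_time below_threshold t0 below_threshold_open below_threshold_init
              (proj1 Ht0) Hleave) as (T & [HT0 HTt0] & Hbefore & Hexit).
  assert (HTh : T <= horizon) by lra.
  exists T; split; [apply (T1a_exit T); assumption |].
  split; [lra |].
  split; [apply (rfun_exit T); assumption |].
  split; [apply (a_at_exit T); assumption |].
  split; [apply (C_at_exit T); assumption |].
  intros t Ht; split; [apply (rfun_le_upto_exit T) | apply (bounds_upto_exit T)]; assumption.
Qed.

End PhaseOne.

Lemma Rabs_ratio_sub_1 (x y rho : R) : 0 < rho -> 0 <= y -> x = rho - y ->
  Rabs (x / rho - 1) = y / rho.
Proof.
  intros Hrho Hy ->; replace ((rho - y) / rho - 1) with (- (y / rho)) by (field; lra).
  rewrite Rabs_Ropp; apply Rabs_right, Rle_ge, Rdiv_le_0_compat; lra.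
Qed.

Theorem propositionB3 :
  forall (c0 K1 K2 rho : R),
    0 < c0 -> 0 < K1 -> 0 < K2 -> 0 < rho < 1 / 12 ->
    exists CT Ca CC : R,
      forall eps : R, 0 < eps ->
      exists D : nat,
        forall (d : nat) (lam : R) (a b c : R -> R),
          (3 <= d)%nat -> (D <= d)%nat ->
          0 < lam -> K1 * ln (INR d) <= lam <= K2 * INR d ->
          is_solution d lam c0 a b c ->
          exists T : R,
            T1a d lam rho a b c = Finite T /\
            (* (1) *)
            (forall t, 0 <= t <= T ->
               rfun d lam a b c t <= rho /\
               a 0 * exp (24 * (1 - rho) * t) <= a t <= a 0 * exp (24 * t) /\
               b 0 * exp (8 * (1 + lam) * (1 - 3 * rho) * t) <= b t
                 <= b 0 * exp (8 * (1 + lam) * t) /\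
               c 0 * exp ((8 * (1 - rho) - 16 * rho / (INR d - 2)) * t) <= c t
                 <= c 0 * exp (8 * t)) /\
            (* (2) *)
            T <= CT * ln (INR d) / lam /\
            (* (3) *)
            Rabs (a T) <= Ca * rho0 d c0 / INR d /\
            Rabs ((INR d - 2) * c T) <= CC * rho0 d c0 /\
            (1 + lam) * b T = rho - a T - (INR d - 2) * c T /\
            Rabs ((1 + lam) * b T / rho - 1) <= eps.
Proof.
  intros c0 K1 K2 rho Hc0 HK1 _ Hrho.
  set (Ca := growth_const c0 K1); assert (HCa : 0 < Ca) by apply exp_pos.
  exists ((1 + c0) / 6), Ca, Ca; intros eps Heps.
  destruct (rho0_eventually_small c0 rho eps Ca Hc0 (proj1 Hrho) Heps HCa) as [D HD].
  exists D; intros d lam a b c Hd HdD Hlam [HK1lam _] Hsol.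
  destruct (HD d HdD) as [Hrho0 Hsmall]; pose proof (INR_ge3 d Hd); pose proof (rho0_pos d c0).
  destruct (phase_one d lam c0 rho a b c Hd Hlam Hrho Hsol Hc0 Hrho0 K1 HK1 HK1lam)
    as (T & HT1a & [_ HTh] & HrT & [HaT HaCa] & [HCT HCCa] & Hbounds).
  fold Ca in HaCa, HCCa.
  assert (HB : (1 + lam) * b T = rho - a T - (INR d - 2) * c T) by (unfold rfun in HrT; lra).
  assert (Hdiv : Ca * rho0 d c0 / INR d <= Ca * rho0 d c0) by (apply Rle_div_l; nra).
  exists T; split; [exact HT1a | split; [exact Hbounds | split; [exact HTh |]]].
  rewrite !Rabs_right by lra; repeat split; try lra.
  rewrite (Rabs_ratio_sub_1 _ (a T + (INR d - 2) * c T) rho) by lra.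
  apply Rle_div_l; lra.
Qed.
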